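(* Let $X$ be a Banach space, $f_1,f_2:X\to\mathbb{R}\cup\{+\infty\}$ convex functions, $\bar x\in\operatorname{dom} f_1\cap\operatorname{dom} f_2$, and suppose $0\in\partial f_1(\bar x)+\partial f_2(\bar x)$. Then the pair $\{f_1,f_2\}$ is uniformly lower semicontinuous on $X$, i.e., $\inf_{x\in X}(f_1+f_2)(x)\le \liminf_{\|x-u\|\to 0}\big(f_1(x)+f_2(u)\big)$.
   Context: $\operatorname{dom} f=\{x: f(x)<+\infty\}$. The (Fenchel) subdifferential of $f$ at $\bar x\in\operatorname{dom} f$ is $\partial f(\bar x)=\{x^*\in X^*: f(x)-f(\bar x)-\langle x^*,x-\bar x\rangle\ge0\ \forall x\in X\}$. Here $\liminf_{\|x-u\|\to0}(f_1(x)+f_2(u)):=\lim_{\delta\downarrow0}\inf\{f_1(x)+f_2(u): x,u\in X,\ \|x-u\|<\delta\}$; this is the uniform infimum $\Lambda_X(\{f_1,f_2\})$ of the pair on $X$, and uniform lower semicontinuity on $X$ means $\inf_X(f_1+f_2)\le\Lambda_X(\{f_1,f_2\})$. *)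

From HB Require Import structures.
From mathcomp Require Import all_boot all_order all_algebra.
From mathcomp Require Import all_classical all_reals all_analysis.
Set Implicit Arguments. Unset Strict Implicit. Unset Printing Implicit Defensive.
Import Order.TTheory GRing.Theory Num.Theory numFieldNormedType.Exports.
Local Open Scope classical_set_scope.
Local Open Scope ring_scope.

(* f : X -> R ∪ {+oo} : never takes the value -oo *)
Definition proper_valued {R : realType} {X : Type} (f : X -> \bar R) : Prop :=
  forall x, f x != -oo%E.

Definition dom {R : realType} {X : Type} (f : X -> \bar R) : set X :=
  [set x | (f x < +oo)%E].

Definition convex_fun {R : realType} (X : normedModType R) (f : X -> \bar R) : Prop :=
  forall (x y : X) (t : R), 0 < t < 1 ->
    (f (t *: x + (1 - t) *: y)%R <= t%:E * f x + (1 - t)%:E * f y)%E.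

Definition dual_elem {R : realType} (X : normedModType R) (xs : X -> R) : Prop :=
  (forall (a : R) (u v : X), xs (a *: u + v) = a * xs u + xs v) /\ continuous xs.

Definition in_subdiff {R : realType} (X : normedModType R) (f : X -> \bar R)
  (xb : X) (xs : X -> R) : Prop :=
  dual_elem xs /\ forall x : X, (f x - f xb - (xs (x - xb)%R)%:E >= 0)%E.

Definition inf_sum {R : realType} (X : normedModType R) (f1 f2 : X -> \bar R) : \bar R :=
  ereal_inf [set (f1 x + f2 x)%E | x in [set: X]].

Definition inf_delta {R : realType} (X : normedModType R) (f1 f2 : X -> \bar R)
  (delta : R) : \bar R :=
  ereal_inf [set (f1 xu.1 + f2 xu.2)%E | xu in [set xu : X * X | (`|xu.1 - xu.2| < delta)%R]].

Definition unif_inf {R : realType} (X : normedModType R) (f1 f2 : X -> \bar R) : \bar R :=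
  lim (inf_delta f1 f2 delta @[delta --> 0^'+]).

Definition uniformly_lsc {R : realType} (X : normedModType R) (f1 f2 : X -> \bar R) : Prop :=
  (inf_sum f1 f2 <= unif_inf f1 f2)%E.

From HB Require Import structures.
From mathcomp Require Import all_boot all_order all_algebra.
From mathcomp Require Import all_classical all_reals all_analysis.
From mathcomp Require Import lra.
Set Implicit Arguments. Unset Strict Implicit. Unset Printing Implicit Defensive.
Import Order.TTheory GRing.Theory Num.Theory numFieldNormedType.Exports.
Local Open Scope classical_set_scope.
Local Open Scope ring_scope.

(** Adding the two subgradient inequalities at [xb], with [xs2 = - xs1], gives
    [f1 x + f2 u >= f1 xb + f2 xb + xs1 (x - u)] for all [x, u].  Continuity of
    [xs1] at [0] makes the error term [xs1 (x - u)] uniformly small once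
    [||x - u|| < delta] is small, so [inf_delta delta] tends to
    [f1 xb + f2 xb >= inf (f1 + f2)]. *)

Section ErealSandwich.
Context (R : realType) (T : Type) (F : set_system T) {FF : Filter F}.

Lemma cvge_sandwich (g : T -> \bar R) (l : \bar R) : l \is a fin_num ->
  (forall eps : R, 0 < eps ->
     \forall t \near F, (l - eps%:E <= g t)%E /\ (g t <= l)%E) ->
  g @ F --> l.
Proof.
case: l => // c _ near_c.
have fin_g : \forall t \near F, g t \is a fin_num.
  apply: filterS (near_c 1 ltr01) => t [lo hi].
  by rewrite fin_numElt (lt_le_trans (ltNyr _) lo) (le_lt_trans hi (ltry _)).
apply/fine_cvgP; split => //; apply/cvgrPdist_le => eps eps0.
apply: filterS2 fin_g (near_c eps eps0) => t + [].
move=> /fineK <-; rewrite -EFinB !lee_fin => lo hi.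
rewrite /= ler_norml; apply/andP; split; lra.
Qed.

End ErealSandwich.

Section DualElem.
Variables (R : realType) (X : normedModType R) (xs : X -> R).
Hypothesis xs_dual : dual_elem xs.

Lemma dual_elem0 : xs 0 = 0.
Proof.
have := xs_dual.1 1 0 0; rewrite scaler0 addr0 mul1r => h; lra.
Qed.

Lemma dual_elemB (x u : X) : xs (x - u) = xs x - xs u.
Proof.
have := xs_dual.1 1 (x - u) u; rewrite scale1r mul1r subrK => ->; lra.
Qed.

Lemma dual_elem_small (eps : R) : 0 < eps ->
  exists2 r, 0 < r & forall h : X, `|h| < r -> `|xs h| < eps.
Proof.
move=> eps0; have := @cvgr_dist_lt _ _ _ _ _ xs _ (xs_dual.2 0) _ eps0.
rewrite dual_elem0 => near0.
have [r r0 hr] := (nbhs_norm0P (V:=X)).1 (near0 _); exists r => // h /hr /=.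
by rewrite sub0r normrN.
Qed.

End DualElem.

Lemma subdiff_minorant (R : realType) (X : normedModType R) (f : X -> \bar R)
    (xb : X) (xs : X -> R) :
  proper_valued f -> dom f xb -> in_subdiff f xb xs ->
  forall x, (f xb + (xs (x - xb))%:E <= f x)%E.
Proof.
move=> f_proper xb_dom [_ sub] x.
have := sub x; have := f_proper x; rewrite /dom /= in xb_dom.
case: (f xb) xb_dom (f_proper xb) => [a| |] // _ _.
case: (f x) => [b _ | _ _ | //]; last exact: leey.
by rewrite -!EFinD !lee_fin => h; lra.
Qed.

Section SubdiffSum.
Variables (R : realType) (X : normedModType R) (f1 f2 : X -> \bar R) (xb : X).
Variables (xs1 xs2 : X -> R).
Hypotheses (f1_proper : proper_valued f1) (f2_proper : proper_valued f2).
Hypotheses (xb_dom1 : dom f1 xb) (xb_dom2 : dom f2 xb).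
Hypotheses (sub1 : in_subdiff f1 xb xs1) (sub2 : in_subdiff f2 xb xs2).
Hypothesis xs_opp : forall x, xs1 x + xs2 x = 0.

Let fin_num_xb : (f1 xb + f2 xb)%E \is a fin_num.
Proof.
by rewrite fin_numD !fin_numE f1_proper f2_proper !lt_eqF.
Qed.

Lemma subdiff_sum_minorant (x u : X) :
  (f1 xb + f2 xb + (xs1 (x - u))%:E <= f1 x + f2 u)%E.
Proof.
apply: le_trans (leeD (subdiff_minorant f1_proper xb_dom1 sub1 x)
                      (subdiff_minorant f2_proper xb_dom2 sub2 u)).
have /andP[fin1 fin2] : (f1 xb \is a fin_num) && (f2 xb \is a fin_num).
  by rewrite -fin_numD.
rewrite -(fineK fin1) -(fineK fin2) -!EFinD lee_fin.
rewrite (dual_elemB sub1.1 x u) (dual_elemB sub1.1 x xb) (dual_elemB sub2.1 u xb).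
by have := xs_opp u; have := xs_opp xb; lra.
Qed.

Lemma inf_delta_le_center (delta : R) : 0 < delta ->
  (inf_delta f1 f2 delta <= f1 xb + f2 xb)%E.
Proof.
move=> delta0; apply: ge_ereal_inf; exists (f1 xb + f2 xb)%E => //.
by exists (xb, xb) => //=; rewrite subrr normr0.
Qed.

Lemma inf_delta_ge_center (eps : R) : 0 < eps ->
  \forall delta \near 0^'+, (f1 xb + f2 xb - eps%:E <= inf_delta f1 f2 delta)%E.
Proof.
move=> eps0; have [r r0 small] := dual_elem_small sub1.1 eps0.
near=> delta; apply/ereal_infP => _ [[x u] /= xu_close <-].
apply: le_trans (subdiff_sum_minorant x u); apply: leeD2l; rewrite lee_fin.
have : `|xs1 (x - u)| < eps.
  by apply: small; apply: lt_trans xu_close _; near: delta; exact: nbhs_right_lt.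
by rewrite ltr_norml => /andP[/ltW].
Unshelve. all: by end_near.
Qed.

Lemma cvg_inf_delta :
  inf_delta f1 f2 delta @[delta --> 0^'+] --> (f1 xb + f2 xb)%E.
Proof.
apply: cvge_sandwich fin_num_xb _ => eps eps0.
near=> delta; split; first by near: delta; exact: inf_delta_ge_center.
by apply: inf_delta_le_center; near: delta; exact: nbhs_right_gt.
Unshelve. all: by end_near.
Qed.

End SubdiffSum.

Theorem proposition2p4 (R : realType) (X : completeNormedModType R)
  (f1 f2 : X -> \bar R) (xb : X) :
  proper_valued f1 -> proper_valued f2 ->
  convex_fun f1 -> convex_fun f2 ->
  xb \in dom f1 `&` dom f2 ->
  (exists xs1 xs2 : X -> R,
      in_subdiff f1 xb xs1 /\ in_subdiff f2 xb xs2 /\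
      (forall x, xs1 x + xs2 x = 0)) ->
  uniformly_lsc f1 f2.
Proof.
move=> f1_proper f2_proper _ _ /set_mem[xb_dom1 xb_dom2] [xs1 [xs2 [sub1 [sub2 xs_opp]]]].
have := cvg_inf_delta f1_proper f2_proper xb_dom1 xb_dom2 sub1 sub2 xs_opp.
move/(cvg_lim (@ereal_hausdorff R)) => lim_center.
rewrite /uniformly_lsc /unif_inf lim_center.
by apply: ge_ereal_inf; exists (f1 xb + f2 xb)%E => //; exists xb.
Qed.
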